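(* Under the setup and conditions of the context, DDD-PCT and no anticipation, for every $j\in\mathcal E$ (including $j<0$) the population coefficient $\alpha_j$ of the regression $Y_{i,t}=\alpha_i+\delta_{S_i,t}+\eta_{Q_i,t}+\sum_{e\in\mathcal E}\alpha_eR_e(i,t)+\varepsilon_{i,t}$ satisfies $$\alpha_j=\sum_{g\in\mathcal G_{\mathrm{trg}}}\sum_{\ell=0}^{K}\omega^{j,\star}_{g,\ell}\,\mathrm{CATT}(g,\ell).$$
   Context: Setup: balanced panel of units $i$ over $t\in\{1,\dots,T\}$; treatment-enabling group $S_i\in\mathcal S\subseteq\{2,\dots,T\}\cup\{\infty\}$; time-invariant eligibility $Q_i\in\{0,1\}$; $\mathcal G_{\mathrm{trg}}=\mathcal S\setminus\{\infty\}$. Potential outcomes $Y_{i,t}(g)$, $g\in\mathcal G_{\mathrm{trg}}$, and $Y_{i,t}(\infty)$; observed $Y_{i,t}=Y_{i,t}(g)$ if $S_i=g\in\mathcal G_{\mathrm{trg}}$ and $Q_i=1$, else $Y_{i,t}=Y_{i,t}(\infty)$. Data i.i.d. with finite second moments. $\mathrm{CATT}(g,e)=\mathbb E[Y_{i,g+e}(g)-Y_{i,g+e}(\infty)\mid S_i=g,Q_i=1]$. $\mathcal E=\{-L,\dots,K\}\setminus\{-1\}$; the window covers all event times. $R_e(i,t)=\mathbb 1\{t-S_i=e\}Q_i$, $R_{g,\ell}(i,t)=\mathbb 1\{S_i=g,Q_i=1,t=g+\ell\}$; population least-squares coefficients over units and periods; the Gram matrix of the three-way demeaned (unit, group-by-time,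 eligibility-by-time) event-time indicators is nonsingular. $\omega^{j,\star}_{g,\ell}$: coefficient on $R_j$ in the population regression of $R_{g,\ell}$ on $\alpha_i,\delta_{S_i,t},\eta_{Q_i,t},\{R_e\}_{e\in\mathcal E}$. No anticipation: $Y_{i,t}(g)=Y_{i,t}(\infty)$ a.s. for all $g\in\mathcal G_{\mathrm{trg}}$, $t<g$. DDD-PCT: for all $g\in\mathcal G_{\mathrm{trg}}$, $g_c\in\mathcal S$ with $g_c>g$, $t\in\{2,\dots,T\}$ with $t\le g_c$: $\Delta_t(g,1)-\Delta_t(g,0)=\Delta_t(g_c,1)-\Delta_t(g_c,0)$, where $\Delta_t(s,q)=\mathbb E[Y_{i,t}(\infty)-Y_{i,t-1}(\infty)\mid S_i=s,Q_i=q]$. *)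

From HB Require Import structures.
From mathcomp Require Import all_boot all_order all_algebra.
From mathcomp Require Import all_classical all_reals all_analysis.

Set Implicit Arguments.
Unset Strict Implicit.
Unset Printing Implicit Defensive.

Import Order.TTheory GRing.Theory Num.Theory.
Local Open Scope classical_set_scope.
Local Open Scope ring_scope.

(* Groups: [Some g] is the treatment-enabling period g, [None] is "infinity"
   (never enabled). Periods are natural numbers t, relevant for 1 <= t <= T.
   Eligibility Q is a boolean (true = 1). Potential outcomes
   [Y s t x] = Y_{i,t}(s) for the unit realised at sample point x. *)

Section DDD.
Variables (R : realType) (d : measure_display) (Omega : measurableType d).
Variable (P : probability Omega R).

Definition Yobs (Y : option nat -> nat -> Omega -> R) (S : Omega -> option nat)
  (Q : Omega -> bool) (t : nat) (x : Omega) : R :=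
  match S x with
  | Some g => if Q x then Y (Some g) t x else Y None t x
  | None => Y None t x
  end.

(* Event-time window  E = {-L, ..., K} \ {-1}, as a duplicate-free sequence *)
Definition Eseq (L K : nat) : seq int :=
  [seq e <- [seq (k%:Z - L%:Z) | k <- iota 0 (L + K).+1] | e != -1].

Definition Gtrg (Sset : seq (option nat)) : seq nat := undup (pmap id Sset).

Definition Rind (S : Omega -> option nat) (Q : Omega -> bool) (e : int)
  (t : nat) (x : Omega) : R :=
  match S x with
  | Some g => if Q x && (t%:Z - g%:Z == e) then 1 else 0
  | None => 0
  end.

Definition Rgl (S : Omega -> option nat) (Q : Omega -> bool) (g l : nat)
  (t : nat) (x : Omega) : R :=
  if (S x == Some g) && Q x && (t == g + l)%N then 1 else 0.

Definition fitval (L K : nat) (S : Omega -> option nat) (Q : Omega -> bool)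
  (a : Omega -> R) (dl : option nat -> nat -> R) (et : bool -> nat -> R)
  (al : int -> R) (t : nat) (x : Omega) : R :=
  a x + dl (S x) t + et (Q x) t + \sum_(e <- Eseq L K) al e * Rind S Q e t x.

Definition lsloss (T L K : nat) (S : Omega -> option nat) (Q : Omega -> bool)
  (Z : nat -> Omega -> R)
  (a : Omega -> R) (dl : option nat -> nat -> R) (et : bool -> nat -> R)
  (al : int -> R) : \bar R :=
  (\int[P]_x (\sum_(1 <= t < T.+1) (Z t x - fitval L K S Q a dl et al t x) ^+ 2)%:E)%E.

Definition ols_coef (T L K : nat) (S : Omega -> option nat) (Q : Omega -> bool)
  (Z : nat -> Omega -> R) (al : int -> R) : Prop :=
  exists (a : Omega -> R) (dl : option nat -> nat -> R) (et : bool -> nat -> R),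
    measurable_fun setT a /\
    forall (a' : Omega -> R) (dl' : option nat -> nat -> R) (et' : bool -> nat -> R)
           (al' : int -> R),
      measurable_fun setT a' ->
      (lsloss T L K S Q Z a dl et al <= lsloss T L K S Q Z a' dl' et' al')%E.

Definition fe_proj (T L K : nat) (S : Omega -> option nat) (Q : Omega -> bool)
  (Z : nat -> Omega -> R)
  (a : Omega -> R) (dl : option nat -> nat -> R) (et : bool -> nat -> R) : Prop :=
  measurable_fun setT a /\
  forall (a' : Omega -> R) (dl' : option nat -> nat -> R) (et' : bool -> nat -> R),
    measurable_fun setT a' ->
    (lsloss T L K S Q Z a dl et (fun _ => 0%R) <= lsloss T L K S Q Z a' dl' et' (fun _ => 0%R))%E.

Definition Rdm (L K : nat) (S : Omega -> option nat) (Q : Omega -> bool) (e : int)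
  (a : Omega -> R) (dl : option nat -> nat -> R) (et : bool -> nat -> R)
  (t : nat) (x : Omega) : R :=
  Rind S Q e t x - fitval L K S Q a dl et (fun _ => 0%R) t x.

Definition gram (T L K : nat) (S : Omega -> option nat) (Q : Omega -> bool)
  (A : int -> Omega -> R) (D : int -> option nat -> nat -> R) (H : int -> bool -> nat -> R)
  : 'M[R]_(size (Eseq L K)) :=
  \matrix_(i, j)
    let e := nth 0 (Eseq L K) i in
    let e' := nth 0 (Eseq L K) j in
    fine (\int[P]_x (\sum_(1 <= t < T.+1)
            Rdm L K S Q e (A e) (D e) (H e) t x * Rdm L K S Q e' (A e') (D e') (H e') t x)%:E)%E.

Definition cmean (X : Omega -> R) (A : set Omega) : R :=
  fine (\int[P]_(x in A) (X x)%:E)%E / fine (P A).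

Definition CATT (Y : option nat -> nat -> Omega -> R) (S : Omega -> option nat)
  (Q : Omega -> bool) (g l : nat) : R :=
  cmean (fun x => Y (Some g) (g + l)%N x - Y None (g + l)%N x)
        [set x | S x = Some g /\ Q x = true].

Definition Delta (Y : option nat -> nat -> Omega -> R) (S : Omega -> option nat)
  (Q : Omega -> bool) (t : nat) (s : option nat) (q : bool) : R :=
  cmean (fun x => Y None t x - Y None t.-1 x) [set x | S x = s /\ Q x = q].

End DDD.

Definition grp_gt (gc : option nat) (g : nat) : bool :=
  if gc is Some c then (g < c)%N else true.
Definition time_le (t : nat) (gc : option nat) : bool :=
  if gc is Some c then (t <= c)%N else true.

Arguments Rind {R d Omega}.
Arguments Rgl {R d Omega}.

From Pilot Require Import Defs.
From HB Require Import structures.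
From mathcomp Require Import all_boot all_order all_algebra.
From mathcomp Require Import all_classical all_reals all_analysis.
From mathcomp Require Import measurable_realfun.
From mathcomp.algebra_tactics Require Import ring lra.
From mathcomp Require Import zify.

Set Implicit Arguments.
Unset Strict Implicit.
Unset Printing Implicit Defensive.
Import Order.TTheory GRing.Theory Num.Theory.
Local Open Scope classical_set_scope.
Local Open Scope ring_scope.

(* The observed outcome splits as [Yobs = Ynet + \sum_(g, l) CATT(g, l) R_{g,l}], where
   [Ynet] subtracts the CATTs from the eligible treated cells.  By the definition of the
   CATTs and no anticipation, every (S, Q)-cell mean of [Ynet_t] is that of [Y_t(oo)], and
   DDD-PCT against the never-treated group makes these cell means the sum of a unit-level,
   a group-by-time and an eligibility-by-time term.  Hence the fixed effects alone solve
   the population normal equations for [Ynet], with zero event-time coefficients.  The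
   normal equations are linear in the dependent variable, so [\sum CATT(g, l) omega_{g,l}]
   solves them for [Yobs]; nonsingularity of the Gram matrix of the demeaned event-time
   indicators makes event-time coefficients unique, so they equal [alpha].  The same
   nonsingularity forces [T > 0] and the presence of a never-treated group. *)

Lemma sum_mul_eq_delta (R : nzRingType) (I : eqType) (r : seq I) (y : I) (F : I -> R) :
  uniq r -> y \in r -> \sum_(s <- r) F s * (s == y)%:R = F y.
Proof.
move=> ur yr; rewrite (bigD1_seq y) //= eqxx mulr1 big1 ?addr0 // => s /negbTE ->.
by rewrite mulr0.
Qed.

Lemma quadratic_min_at0 (R : realFieldType) (A b c : R) : 0 <= c ->
  (forall s, A <= A - 2 * s * b + s ^+ 2 * c) -> b = 0.
Proof.
move=> c0 Hmin; set s := b / (c + 1).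
have hb : b = s * (c + 1) by rewrite /s divfK // gt_eqF // ltr_wpDl.
have ss0 : s * s * (c + 2) <= 0.
  by have := Hmin s; rewrite [X in 2 * s * X]hb; nra.
have s0 : s = 0.
  apply/eqP; rewrite -[s == 0]orbb -mulf_eq0 eq_le sqr_ge0 andbT.
  by rewrite -(pmulr_lle0 _ (_ : 0 < c + 2)) //; lra.
by rewrite hb s0 mul0r.
Qed.

Lemma normrM_le_sqrD (R : realDomainType) (a b : R) : `|a * b| <= a ^+ 2 + b ^+ 2.
Proof.
rewrite normrM -(real_normK (num_real a)) -(real_normK (num_real b)).
have := normr_ge0 a; have := normr_ge0 b; nra.
Qed.

Section RealIntegrable.
Context (R : realType) (d : measure_display) (Omega : measurableType d).
Variable mu : {finite_measure set Omega -> \bar R}.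

Lemma integrable_cst_EFin (k : R) : mu.-integrable setT (EFin \o (fun _ : Omega => k)).
Proof. exact: finite_measure_integrable_cst. Qed.

Lemma le_integrable_EFin (f g : Omega -> R) : measurable_fun setT f ->
  (forall x, `|f x| <= g x) -> mu.-integrable setT (EFin \o g) ->
  mu.-integrable setT (EFin \o f).
Proof.
move=> mf fg ig; apply: (le_integrable measurableT _ _ ig).
  exact/measurable_EFinP.
move=> x _ /=; rewrite lee_fin; apply: (le_trans (fg x)).
by rewrite ger0_norm // (le_trans _ (fg x)).
Qed.

Lemma integrableD_EFin (f g : Omega -> R) : mu.-integrable setT (EFin \o f) ->
  mu.-integrable setT (EFin \o g) ->
  mu.-integrable setT (EFin \o (fun x => f x + g x)).
Proof.
by move=> hf hg; apply: eq_integrable (integrableD measurableT hf hg).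
Qed.

Lemma integrableZl_EFin (k : R) (f : Omega -> R) : mu.-integrable setT (EFin \o f) ->
  mu.-integrable setT (EFin \o (fun x => k * f x)).
Proof.
by move=> hf; apply: eq_integrable (integrableZl measurableT k hf).
Qed.

Lemma integrable_sum_EFin (I : eqType) (s : seq I) (f : I -> Omega -> R) :
  (forall i, i \in s -> mu.-integrable setT (EFin \o f i)) ->
  mu.-integrable setT (EFin \o (fun x => \sum_(i <- s) f i x)).
Proof.
move=> hf; have := integrable_sum measurableT s (P := fun i => i \in s)
  (h := fun i => EFin \o f i) hf.
by apply: eq_integrable => // x _ /=; rewrite -sumEFin big_seq.
Qed.

Lemma Rintegral_sum (I : eqType) (s : seq I) (f : I -> Omega -> R) :
  (forall i, i \in s -> mu.-integrable setT (EFin \o f i)) ->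
  \int[mu]_x (\sum_(i <- s) f i x) = \sum_(i <- s) \int[mu]_x f i x.
Proof.
elim: s => [|i s IH] hf.
  by rewrite big_nil; under eq_Rintegral do rewrite big_nil; rewrite Rintegral_cst // mul0r.
have hs j : j \in s -> mu.-integrable setT (EFin \o f j).
  by move=> js; apply: hf; rewrite in_cons js orbT.
rewrite big_cons -IH //; under eq_Rintegral do rewrite big_cons.
by rewrite RintegralD //; [apply: hf; rewrite mem_head | apply: integrable_sum_EFin].
Qed.

End RealIntegrable.

Section SquareIntegrable.
Context (R : realType) (d : measure_display) (Omega : measurableType d).
Variable mu : {finite_measure set Omega -> \bar R}.
Implicit Types f g h : Omega -> R.

Definition square_integrable f :=
  measurable_fun setT f /\ mu.-integrable setT (fun x => (f x ^+ 2)%:E).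

Lemma square_integrable_integrableM f g : square_integrable f -> square_integrable g ->
  mu.-integrable setT (EFin \o (fun x => f x * g x)).
Proof.
move=> [mf if2] [mg ig2]; apply: (le_integrable_EFin (g := fun x => f x ^+ 2 + g x ^+ 2)).
- exact: measurable_funM.
- by move=> x; apply: normrM_le_sqrD.
- exact: integrableD_EFin.
Qed.

Lemma square_integrable_integrable f : square_integrable f ->
  mu.-integrable setT (EFin \o f).
Proof.
move=> [mf if2]; apply: (le_integrable_EFin (g := fun x => f x ^+ 2 + 1)) => //.
- by move=> x; have := normrM_le_sqrD (f x) 1; rewrite mulr1 expr1n.
- by apply: integrableD_EFin => //; apply: integrable_cst_EFin.
Qed.

Lemma square_integrable_bounded h (M : R) : measurable_fun setT h ->
  (forall x, `|h x| <= M) -> square_integrable h.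
Proof.
move=> mh hM; split => //.
apply: (le_integrable_EFin (g := fun _ => M ^+ 2)).
- exact: measurable_funX.
- move=> x; rewrite normrX; apply: lerXn2r; rewrite ?nnegrE //.
  exact: le_trans (normr_ge0 _) (hM x).
- exact: integrable_cst_EFin.
Qed.

Lemma square_integrable_cst (k : R) : square_integrable (fun _ => k).
Proof. exact: (square_integrable_bounded (M := `|k|)). Qed.

Lemma square_integrableD f g : square_integrable f -> square_integrable g ->
  square_integrable (fun x => f x + g x).
Proof.
move=> hf hg; split; first by apply: measurable_funD; [case: hf | case: hg].
apply: (le_integrable_EFin (g := fun x => (f x ^+ 2 + g x ^+ 2) + (f x * g x + f x * g x))).
- by apply: measurable_funX; apply: measurable_funD; [case: hf | case: hg].
- by move=> x; rewrite ger0_norm ?sqr_ge0 //; nra.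
- apply: integrableD_EFin; first by apply: integrableD_EFin; [case: hf | case: hg].
  by apply: integrableD_EFin; apply: square_integrable_integrableM.
Qed.

Lemma square_integrableZ (k : R) f : square_integrable f ->
  square_integrable (fun x => k * f x).
Proof.
move=> [mf if2]; split; first exact: measurable_funM.
apply: eq_integrable (integrableZl_EFin (k ^+ 2) if2) => // x _ /=.
by rewrite exprMn.
Qed.

Lemma square_integrableN f : square_integrable f -> square_integrable (fun x => - f x).
Proof.
move=> /(square_integrableZ (-1)); congr square_integrable.
by apply/funext => x; rewrite mulN1r.
Qed.

Lemma square_integrableB f g : square_integrable f -> square_integrable g ->
  square_integrable (fun x => f x - g x).
Proof. by move=> hf /square_integrableN; apply: square_integrableD. Qed.

Lemma square_integrable_sum (I : eqType) (s : seq I) (f : I -> Omega -> R) :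
  (forall i, i \in s -> square_integrable (f i)) ->
  square_integrable (fun x => \sum_(i <- s) f i x).
Proof.
elim: s => [|i s IH] hf.
  by under eq_fun do rewrite big_nil; apply: square_integrable_cst.
under eq_fun do rewrite big_cons.
apply: square_integrableD; first by apply: hf; rewrite mem_head.
by apply: IH => j js; apply: hf; rewrite in_cons js orbT.
Qed.

Lemma square_integrableMl h f (M : R) : measurable_fun setT h ->
  (forall x, `|h x| <= M) -> square_integrable f -> square_integrable (fun x => h x * f x).
Proof.
move=> mh hM [mf if2]; split; first exact: measurable_funM.
apply: (le_integrable_EFin (g := fun x => M ^+ 2 * f x ^+ 2)).
- by apply: measurable_funX; apply: measurable_funM.
- move=> x; rewrite ger0_norm ?sqr_ge0 // exprMn.
  apply: ler_wpM2r; first exact: sqr_ge0.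
  rewrite -(real_normK (num_real (h x))); apply: lerXn2r; rewrite ?nnegrE //.
  exact: le_trans (normr_ge0 _) (hM x).
- exact: integrableZl_EFin.
Qed.

End SquareIntegrable.

Section PanelInnerProduct.
Context (R : realType) (d : measure_display) (Omega : measurableType d).
Variables (mu : {finite_measure set Omega -> \bar R}) (T : nat).
Implicit Types (u v w r F : nat -> Omega -> R).

Definition panel_dot u v : R := \sum_(1 <= t < T.+1) \int[mu]_x (u t x * v t x).

Definition panel_square_integrable u :=
  forall t, (1 <= t <= T)%N -> square_integrable mu (u t).

Lemma panel_dotC u v : panel_dot u v = panel_dot v u.
Proof. by apply: eq_bigr => t _; apply: eq_Rintegral => x _; rewrite mulrC. Qed.

Lemma panel_dot_ge0 u : 0 <= panel_dot u u.
Proof. by apply: sumr_ge0 => t _; apply: Rintegral_ge0 => x _; rewrite -expr2 sqr_ge0. Qed.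

Lemma panel_dot_eq0l u v : (forall t x, (1 <= t <= T)%N -> u t x = 0) -> panel_dot u v = 0.
Proof.
move=> u0; rewrite /panel_dot big_nat big1 // => t ht.
under eq_Rintegral => x _ do rewrite u0 // mul0r.
by rewrite Rintegral_cst // mul0r.
Qed.

Lemma panel_dotDr u v w : panel_square_integrable u -> panel_square_integrable v ->
  panel_square_integrable w ->
  panel_dot u (fun t x => v t x + w t x) = panel_dot u v + panel_dot u w.
Proof.
move=> hu hv hw; rewrite /panel_dot -big_split /= !big_nat; apply: eq_bigr => t ht.
under eq_Rintegral do rewrite mulrDr.
by rewrite RintegralD //; apply: square_integrable_integrableM; auto.
Qed.

Lemma panel_dotZr u v (k : R) : panel_square_integrable u -> panel_square_integrable v ->
  panel_dot u (fun t x => k * v t x) = k * panel_dot u v.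
Proof.
move=> hu hv; rewrite /panel_dot mulr_sumr !big_nat; apply: eq_bigr => t ht.
under eq_Rintegral do rewrite mulrCA.
by rewrite RintegralZl //; apply: square_integrable_integrableM; auto.
Qed.

Lemma panel_dot_sumr (I : eqType) (s : seq I) (c : I -> R) u (v : I -> nat -> Omega -> R) :
  panel_square_integrable u -> (forall i, i \in s -> panel_square_integrable (v i)) ->
  panel_dot u (fun t x => \sum_(i <- s) c i * v i t x) = \sum_(i <- s) c i * panel_dot u (v i).
Proof.
move=> hu hv; rewrite /panel_dot.
under [RHS]eq_bigr => i _ do rewrite mulr_sumr.
rewrite (exchange_big_dep xpredT) //= !big_nat; apply: eq_bigr => t ht.
rewrite (eq_Rintegral _ (g := fun x => \sum_(i <- s) c i * (u t x * v i t x))); last first.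
  by move=> x _; rewrite mulr_sumr; apply: eq_bigr => i _; rewrite mulrCA.
have uv i : i \in s -> mu.-integrable setT (EFin \o (fun x => u t x * v i t x)).
  by move=> si; apply: square_integrable_integrableM; [apply: hu | apply: hv].
rewrite Rintegral_sum => [|i si]; last exact/integrableZl_EFin/uv.
by rewrite !big_seq; apply: eq_bigr => i si; rewrite RintegralZl //; apply: uv.
Qed.

Lemma panel_dot_expand u v (s : R) : panel_square_integrable u -> panel_square_integrable v ->
  panel_dot (fun t x => u t x - s * v t x) (fun t x => u t x - s * v t x) =
  panel_dot u u - 2 * s * panel_dot u v + s ^+ 2 * panel_dot v v.
Proof.
move=> hu hv; rewrite /panel_dot !mulr_sumr -sumrN -!big_split /= !big_nat.
apply: eq_bigr => t ht.
have uu := square_integrable_integrableM (hu t ht) (hu t ht).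
have uv := square_integrable_integrableM (hu t ht) (hv t ht).
have vv := square_integrable_integrableM (hv t ht) (hv t ht).
rewrite (eq_Rintegral _ (g := fun x => u t x * u t x +
  ((- (2 * s)) * (u t x * v t x) + s ^+ 2 * (v t x * v t x)))); last by move=> x _; ring.
rewrite RintegralD //; last by apply: integrableD_EFin; apply: integrableZl_EFin.
rewrite RintegralD ?RintegralZl //; try exact: integrableZl_EFin.
ring.
Qed.

Lemma panel_dot_eq0_of_min r F : panel_square_integrable r -> panel_square_integrable F ->
  (forall s, panel_dot r r <= panel_dot (fun t x => r t x - s * F t x)
                                        (fun t x => r t x - s * F t x)) ->
  panel_dot r F = 0.
Proof.
move=> hr hF rmin; apply: (quadratic_min_at0 (A := panel_dot r r) (panel_dot_ge0 F)) => s.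
by rewrite -panel_dot_expand.
Qed.

Lemma integral_panel_sum (f : nat -> Omega -> R) :
  (forall t, (1 <= t <= T)%N -> mu.-integrable setT (EFin \o f t)) ->
  (\int[mu]_x (\sum_(1 <= t < T.+1) f t x)%:E =
   (\sum_(1 <= t < T.+1) \int[mu]_x f t x)%:E)%E.
Proof.
move=> hf; have hf' t : t \in index_iota 1 T.+1 -> mu.-integrable setT (EFin \o f t).
  by rewrite mem_index_iota; apply: hf.
rewrite -Rintegral_sum // /Rintegral fineK //.
exact: integrable_fin_num (integrable_sum_EFin hf').
Qed.

Lemma integral_panel_sqr r : panel_square_integrable r ->
  (\int[mu]_x (\sum_(1 <= t < T.+1) r t x ^+ 2)%:E = (panel_dot r r)%:E)%E.
Proof.
move=> hr; rewrite integral_panel_sum => [|t ht]; last by case: (hr t ht).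
by congr EFin; apply: eq_bigr => t _; apply: eq_Rintegral => x _; rewrite expr2.
Qed.

Lemma panel_square_integrable_of_lty r :
  (forall t, (1 <= t <= T)%N -> measurable_fun setT (r t)) ->
  (\int[mu]_x (\sum_(1 <= t < T.+1) r t x ^+ 2)%:E < +oo)%E ->
  panel_square_integrable r.
Proof.
move=> mr fin t ht; split; first exact: mr.
pose F x := \sum_(1 <= u < T.+1) r u x ^+ 2.
have mF : measurable_fun setT F.
  rewrite (_ : F = fun x => \sum_(u <- index_iota 1 T.+1)
                             if u \in index_iota 1 T.+1 then r u x ^+ 2 else 0).
    apply: measurable_sum => u; case: (boolP (u \in _)) => hu /=; last exact: measurable_cst.
    by apply/measurable_funX/mr; move: hu; rewrite mem_index_iota.
  by apply/funext => x; rewrite /F [LHS]big_seq big_mkcond.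
have F0 x : 0 <= F x by apply: sumr_ge0 => u _; apply: sqr_ge0.
have iF : mu.-integrable setT (EFin \o F).
  apply/integrableP; split; first exact/measurable_EFinP.
  by under eq_integral do rewrite /= ger0_norm //.
apply: (le_integrable_EFin (g := F)) => //; first exact/measurable_funX/mr.
move=> x; rewrite ger0_norm ?sqr_ge0 // /F (bigD1_seq t) ?iota_uniq ?mem_index_iota //=.
by rewrite lerDl sumr_ge0 // => u _; rewrite sqr_ge0.
Qed.

End PanelInnerProduct.

Section CellFunctions.
Context (R : realType) (d : measure_display) (Omega : measurableType d).
Variable mu : {finite_measure set Omega -> \bar R}.
Variables (Sset : seq (option nat)) (S : Omega -> option nat) (Q : Omega -> bool).
Hypothesis S_in : forall x, S x \in Sset.
Hypothesis measurable_S : forall s, measurable (S @^-1` [set s]).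
Hypothesis measurable_Q : measurable (Q @^-1` [set true]).
Implicit Types (h : option nat -> bool -> R) (f : Omega -> R).

Definition cell s q := [set x | S x = s /\ Q x = q].

Lemma measurable_cell s q : measurable (cell s q).
Proof.
have -> : cell s q = S @^-1` [set s] `&` Q @^-1` [set q] by apply/seteqP; split => x.
apply: measurableI => //; case: q => //.
have -> : Q @^-1` [set false] = ~` (Q @^-1` [set true]).
  by apply/seteqP; split => x /=; case: (Q x).
exact: measurableC.
Qed.

Lemma indic_cellE s q x : \1_(cell s q) x = ((S x == s) && (Q x == q))%:R :> R.
Proof.
rewrite indicE; case: (boolP (_ && _)) => [/andP[/eqP <- /eqP <-]|hn].
  by rewrite mem_set.
by rewrite memNset // => -[e1 e2]; move: hn; rewrite e1 e2 !eqxx.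
Qed.

Lemma measurable_indic_cell s q : measurable_fun setT (\1_(cell s q) : Omega -> R).
Proof. exact/measurable_indic/measurable_cell. Qed.

Lemma normr_indic_cell_le1 s q x : `|\1_(cell s q) x : R| <= 1.
Proof. by rewrite indicE; case: (_ \in _); rewrite ?normr1 ?normr0. Qed.

Definition cells := [seq (s, q) | s <- undup Sset, q <- [:: true; false]].

Lemma mem_cells sq : sq \in cells -> sq.1 \in Sset.
Proof. by case: sq => s q /allpairsP [[s' q'] [+ _ [-> _]]]; rewrite mem_undup. Qed.

Lemma cellfun_expand h x :
  h (S x) (Q x) = \sum_(sq <- cells) h sq.1 sq.2 * \1_(cell sq.1 sq.2) x.
Proof.
rewrite /cells big_allpairs_dep /=.
rewrite -(sum_mul_eq_delta (fun s => h s (Q x)) (undup_uniq Sset)) ?mem_undup //.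
apply: eq_bigr => s _; rewrite !big_cons big_nil addr0 !indic_cellE (eq_sym s).
by case: (S x == s); case: (Q x); rewrite /= ?mulr0 ?mulr1 ?addr0 ?add0r.
Qed.

Lemma measurable_cellfun h : measurable_fun setT (fun x => h (S x) (Q x)).
Proof.
under eq_fun do rewrite cellfun_expand.
by apply: measurable_sum => sq; apply: measurable_funM => //; apply: measurable_indic_cell.
Qed.

Lemma square_integrable_indic_cellM s q f : square_integrable mu f ->
  square_integrable mu (fun x => \1_(cell s q) x * f x).
Proof.
apply: (square_integrableMl (M := 1)); [exact: measurable_indic_cell | exact: normr_indic_cell_le1].
Qed.

Lemma square_integrable_cellfunM h f : square_integrable mu f ->
  square_integrable mu (fun x => h (S x) (Q x) * f x).
Proof.
move=> hf; under eq_fun do rewrite cellfun_expand mulr_suml.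
apply: square_integrable_sum => sq _; under eq_fun do rewrite -mulrA.
exact/square_integrableZ/square_integrable_indic_cellM.
Qed.

Lemma square_integrable_cellfun h : square_integrable mu (fun x => h (S x) (Q x)).
Proof.
have := square_integrable_cellfunM h (square_integrable_cst mu 1).
by under eq_fun do rewrite mulr1.
Qed.

Lemma Rintegral_cellfunM h f : square_integrable mu f ->
  \int[mu]_x (h (S x) (Q x) * f x) =
  \sum_(sq <- cells) h sq.1 sq.2 * \int[mu]_x (\1_(cell sq.1 sq.2) x * f x).
Proof.
move=> hf; have hi sq : mu.-integrable setT (EFin \o (fun x => \1_(cell sq.1 sq.2) x * f x)).
  exact/square_integrable_integrable/square_integrable_indic_cellM.
under eq_Rintegral do rewrite cellfun_expand mulr_suml.
under eq_Rintegral do under eq_bigr do rewrite -mulrA.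
rewrite Rintegral_sum => [|sq _]; last exact: integrableZl_EFin.
by apply: eq_bigr => sq _; rewrite RintegralZl.
Qed.

End CellFunctions.

Section LeastSquares.
Context (R : realType) (d : measure_display) (Omega : measurableType d).
Variable P : probability Omega R.
Variables (T L K : nat) (Sset : seq (option nat)) (S : Omega -> option nat) (Q : Omega -> bool).
Hypothesis S_in : forall x, S x \in Sset.
Hypothesis measurable_S : forall s, measurable (S @^-1` [set s]).
Hypothesis measurable_Q : measurable (Q @^-1` [set true]).
Implicit Types (Z : nat -> Omega -> R) (a : Omega -> R) (dl : option nat -> nat -> R)
  (et : bool -> nat -> R) (al : int -> R).

Local Notation fitval := (fitval L K S Q).
Local Notation lsloss := (lsloss P T L K S Q).
Local Notation panel_dot := (panel_dot P T).
Local Notation panel_sqint := (panel_square_integrable P T).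

Definition event_ind (e : int) (t : nat) (s : option nat) (q : bool) : R :=
  if s is Some g then (q && (t%:Z - g%:Z == e))%:R else 0.

Lemma RindE e t x : Rind S Q e t x = event_ind e t (S x) (Q x).
Proof. by rewrite /Rind /event_ind; case: (S x) => // g; case: (_ && _). Qed.

Definition cell_fit dl et al (t : nat) (s : option nat) (q : bool) : R :=
  dl s t + et q t + \sum_(e <- Eseq L K) al e * event_ind e t s q.

Lemma fitvalE a dl et al t x : fitval a dl et al t x = a x + cell_fit dl et al t (S x) (Q x).
Proof.
rewrite /fitval /cell_fit !addrA; congr (_ + _).
by apply: eq_bigr => e _; rewrite RindE.
Qed.

Lemma measurable_fitval a dl et al t : measurable_fun setT a ->
  measurable_fun setT (fitval a dl et al t).
Proof.
move=> ma; rewrite (_ : fitval _ _ _ _ t = fun x => a x + cell_fit dl et al t (S x) (Q x)).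
  exact/measurable_funD/(measurable_cellfun S_in measurable_S measurable_Q).
by apply/funext => x; rewrite fitvalE.
Qed.

Lemma panel_square_integrable_fitval a dl et al : square_integrable P a ->
  panel_sqint (fitval a dl et al).
Proof.
move=> ha t _; rewrite (_ : fitval _ _ _ _ t = fun x => a x + cell_fit dl et al t (S x) (Q x)).
  exact/square_integrableD/(square_integrable_cellfun P S_in measurable_S measurable_Q).
by apply/funext => x; rewrite fitvalE.
Qed.

Lemma fitval_comb a dl et al a' dl' et' al' (s : R) t x :
  fitval (fun x => a x + s * a' x) (fun g t => dl g t + s * dl' g t)
    (fun q t => et q t + s * et' q t) (fun e => al e + s * al' e) t x =
  fitval a dl et al t x + s * fitval a' dl' et' al' t x.
Proof.
rewrite /Defs.fitval; under eq_bigr do rewrite mulrDl -mulrA.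
by rewrite big_split /= -mulr_sumr; ring.
Qed.

Definition resid Z a dl et al (t : nat) (x : Omega) : R := Z t x - fitval a dl et al t x.

Lemma panel_square_integrable_resid Z a dl et al : panel_sqint Z -> square_integrable P a ->
  panel_sqint (resid Z a dl et al).
Proof.
move=> hZ ha t ht; apply: square_integrableB; first exact: hZ.
exact: panel_square_integrable_fitval.
Qed.

Lemma resid_comb Z a dl et al Z' a' dl' et' al' (s : R) t x :
  resid (fun t x => Z t x + s * Z' t x) (fun x => a x + s * a' x)
    (fun g t => dl g t + s * dl' g t) (fun q t => et q t + s * et' q t)
    (fun e => al e + s * al' e) t x =
  resid Z a dl et al t x + s * resid Z' a' dl' et' al' t x.
Proof. by rewrite /resid fitval_comb; ring. Qed.

Lemma lsloss_shift Z a dl et al a' dl' et' al' (s : R) :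
  lsloss Z (fun x => a x + s * a' x) (fun g t => dl g t + s * dl' g t)
    (fun q t => et q t + s * et' q t) (fun e => al e + s * al' e) =
  (\int[P]_x (\sum_(1 <= t < T.+1)
     (resid Z a dl et al t x - s * fitval a' dl' et' al' t x) ^+ 2)%:E)%E.
Proof.
apply: eq_integral => x _; congr EFin; apply: eq_bigr => t _.
by rewrite fitval_comb /resid; congr (_ ^+ 2); ring.
Qed.

Lemma lsloss_min_orth Z a dl et al a' dl' et' al' :
  panel_sqint Z -> square_integrable P a -> square_integrable P a' ->
  (forall s : R, lsloss Z a dl et al <=
     lsloss Z (fun x => a x + s * a' x)%R (fun g t => dl g t + s * dl' g t)%R
       (fun q t => et q t + s * et' q t)%R (fun e => al e + s * al' e)%R)%E ->
  panel_dot (resid Z a dl et al) (fitval a' dl' et' al') = 0.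
Proof.
move=> hZ ha ha' Hmin.
have hr := panel_square_integrable_resid dl et al hZ ha.
have hF := panel_square_integrable_fitval dl' et' al' ha'.
apply: panel_dot_eq0_of_min => // s; rewrite -lee_fin -!integral_panel_sqr //.
  by rewrite -lsloss_shift; apply: Hmin.
by move=> t ht; apply/square_integrableB/square_integrableZ; [apply: hr | apply: hF].
Qed.

Lemma panel_square_integrable_resid_of_min Z a dl et al :
  panel_sqint Z -> measurable_fun setT a ->
  (lsloss Z a dl et al <=
     lsloss Z (fun _ => 0%R) (fun _ _ => 0%R) (fun _ _ => 0%R) (fun _ => 0%R))%E ->
  panel_sqint (resid Z a dl et al).
Proof.
move=> hZ ma Hmin; apply: panel_square_integrable_of_lty.
  by move=> t ht; apply: measurable_funB; [case: (hZ t ht) | exact: measurable_fitval].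
apply: (le_lt_trans Hmin); rewrite [lsloss _ _ _ _ _]integral_panel_sqr ?ltry //.
exact/panel_square_integrable_resid/square_integrable_cst.
Qed.

Lemma square_integrable_unit_effect Z a dl et al : (0 < T)%N ->
  panel_sqint Z -> panel_sqint (resid Z a dl et al) -> square_integrable P a.
Proof.
move=> T0 hZ hr; have h1 := square_integrableB (square_integrableB (hZ 1%N T0) (hr 1%N T0))
  (square_integrable_cellfun P S_in measurable_S measurable_Q (cell_fit dl et al 1)).
by congr square_integrable: h1; apply/funext => x; rewrite /resid fitvalE; ring.
Qed.

Definition normal_eqs Z a dl et al :=
  square_integrable P a /\ forall a' dl' et' al', square_integrable P a' ->
    panel_dot (resid Z a dl et al) (fitval a' dl' et' al') = 0.

Definition solves_normal_eqs Z al := exists a dl et, normal_eqs Z a dl et al.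

Lemma ols_coef_solves_normal_eqs Z al : (0 < T)%N -> panel_sqint Z ->
  ols_coef P T L K S Q Z al -> solves_normal_eqs Z al.
Proof.
move=> T0 hZ [a [dl [et [ma Hmin]]]].
have hr := panel_square_integrable_resid_of_min hZ ma (Hmin _ _ _ _ (measurable_cst (0 : R))).
have ha := square_integrable_unit_effect T0 hZ hr.
exists a, dl, et; split => // a' dl' et' al' ha'.
apply: lsloss_min_orth => // s; apply: Hmin.
by apply: measurable_funD => //; apply: measurable_funM => //; case: ha'.
Qed.

Lemma fe_proj_orth Z a dl et : (0 < T)%N -> panel_sqint Z ->
  fe_proj P T L K S Q Z a dl et ->
  square_integrable P a /\ forall a' dl' et', square_integrable P a' ->
    panel_dot (resid Z a dl et (fun _ => 0)) (fitval a' dl' et' (fun _ => 0)) = 0.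
Proof.
move=> T0 hZ [ma Hmin].
have hr := panel_square_integrable_resid_of_min hZ ma (Hmin _ _ _ (measurable_cst (0 : R))).
have ha := square_integrable_unit_effect T0 hZ hr.
split => // a' dl' et' ha'; apply: lsloss_min_orth => // s.
have -> : (fun e : int => 0 + s * 0) = (fun _ => 0) :> (int -> R).
  by apply/funext => e; rewrite mulr0 addr0.
by apply: Hmin; apply: measurable_funD => //; apply: measurable_funM => //; case: ha'.
Qed.

Lemma solves_normal_eqs_comb Z al Z' al' (c : R) :
  panel_sqint Z -> panel_sqint Z' ->
  solves_normal_eqs Z al -> solves_normal_eqs Z' al' ->
  solves_normal_eqs (fun t x => Z t x + c * Z' t x) (fun e => al e + c * al' e).
Proof.
move=> hZ hZ' [a [dl [et [ha orth]]]] [a' [dl' [et' [ha' orth']]]].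
exists (fun x => a x + c * a' x), (fun g t => dl g t + c * dl' g t),
  (fun q t => et q t + c * et' q t).
split; first exact/square_integrableD/square_integrableZ.
move=> b db eb alb hb; have hF := panel_square_integrable_fitval db eb alb hb.
rewrite (_ : resid _ _ _ _ _ = fun t x =>
    resid Z a dl et al t x + c * resid Z' a' dl' et' al' t x); last first.
  by apply/funext => t; apply/funext => x; rewrite resid_comb.
have hr := panel_square_integrable_resid dl et al hZ ha.
have hr' := panel_square_integrable_resid dl' et' al' hZ' ha'.
have hcr' : panel_sqint (fun t x => c * resid Z' a' dl' et' al' t x).
  by move=> t ht; apply/square_integrableZ/hr'.
rewrite panel_dotC panel_dotDr // panel_dotZr // !(panel_dotC _ _ (fitval _ _ _ _)).
by rewrite orth ?orth' // mulr0 addr0.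
Qed.

Lemma solves_normal_eqs_sum (I : eqType) (r : seq I) (c : I -> R) Z0 al0
    (Z : I -> nat -> Omega -> R) (al : I -> int -> R) :
  panel_sqint Z0 -> (forall i, i \in r -> panel_sqint (Z i)) ->
  solves_normal_eqs Z0 al0 -> (forall i, i \in r -> solves_normal_eqs (Z i) (al i)) ->
  solves_normal_eqs (fun t x => Z0 t x + \sum_(i <- r) c i * Z i t x)
    (fun e => al0 e + \sum_(i <- r) c i * al i e).
Proof.
elim: r Z0 al0 => [|i r IH] Z0 al0 hZ0 hZ s0 sZ.
  have -> : (fun t x => Z0 t x + \sum_(i <- [::]) c i * Z i t x) = Z0.
    by apply/funext => t; apply/funext => x; rewrite big_nil addr0.
  have -> : (fun e => al0 e + \sum_(i <- [::]) c i * al i e) = al0.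
    by apply/funext => e; rewrite big_nil addr0.
  exact: s0.
have -> : (fun t x => Z0 t x + \sum_(j <- i :: r) c j * Z j t x) =
    (fun t x => (Z0 t x + c i * Z i t x) + \sum_(j <- r) c j * Z j t x).
  by apply/funext => t; apply/funext => x; rewrite big_cons addrA.
have -> : (fun e => al0 e + \sum_(j <- i :: r) c j * al j e) =
    (fun e => (al0 e + c i * al i e) + \sum_(j <- r) c j * al j e).
  by apply/funext => e; rewrite big_cons addrA.
have ir : i \in i :: r := mem_head i r.
have sr j : j \in r -> j \in i :: r by move=> jr; rewrite in_cons jr orbT.
apply: IH; last by move=> j /sr; apply: sZ.
- by move=> t ht; apply: square_integrableD; [apply: hZ0 | apply/square_integrableZ/(hZ i ir)].
- by move=> j /sr; apply: hZ.
- by apply: solves_normal_eqs_comb => //; [apply: hZ | apply: sZ].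
Qed.

End LeastSquares.

Lemma mem_Eseq L K e : (e \in Eseq L K) = ((- (L%:Z) <= e <= K%:Z) && (e != -1)).
Proof.
rewrite /Eseq mem_filter andbC; congr andb; apply/mapP/idP.
  by move=> [k]; rewrite mem_iota => hk ->; lia.
by move=> he; exists (absz (e + L%:Z)%R); [rewrite mem_iota | ]; lia.
Qed.

Lemma Eseq_uniq L K : uniq (Eseq L K).
Proof. by rewrite filter_uniq // map_inj_uniq ?iota_uniq // => k1 k2 /= h; lia. Qed.

Lemma mem0_Eseq L K : 0 \in Eseq L K.
Proof. by rewrite mem_Eseq; lia. Qed.

Lemma mem_Gtrg Sset g : (g \in Gtrg Sset) = (Some g \in Sset).
Proof. by rewrite /Gtrg mem_undup mem_pmap map_id. Qed.

Lemma Gtrg_uniq Sset : uniq (Gtrg Sset).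
Proof. exact: undup_uniq. Qed.

Lemma fitval_demeaned_decomp (R : realType) (d : measure_display) (Omega : measurableType d)
    (L K : nat) (S : Omega -> option nat) (Q : Omega -> bool) (A : int -> Omega -> R)
    (D : int -> option nat -> nat -> R) (H : int -> bool -> nat -> R) a dl et be t x :
  fitval L K S Q a dl et be t x =
  fitval L K S Q (fun x => a x + \sum_(e <- Eseq L K) be e * A e x)
    (fun s t => dl s t + \sum_(e <- Eseq L K) be e * D e s t)
    (fun q t => et q t + \sum_(e <- Eseq L K) be e * H e q t) (fun _ => 0) t x +
  \sum_(e <- Eseq L K) be e * Rdm L K S Q e (A e) (D e) (H e) t x.
Proof.
rewrite /Rdm /fitval /=.
have -> : \sum_(e <- Eseq L K) 0 * Rind S Q e t x = 0 :> R.
  by rewrite big1 // => e _; rewrite mul0r.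
under [X in _ = _ + X]eq_bigr => e _ do rewrite addr0 !mulrDr mulrN !mulrDr.
by rewrite sumrB !big_split /=; ring.
Qed.

Section Identification.
Context (R : realType) (d : measure_display) (Omega : measurableType d).
Variable P : probability Omega R.
Variables (T L K : nat) (Sset : seq (option nat)) (S : Omega -> option nat) (Q : Omega -> bool).
Hypothesis S_in : forall x, S x \in Sset.
Hypothesis measurable_S : forall s, measurable (S @^-1` [set s]).
Hypothesis measurable_Q : measurable (Q @^-1` [set true]).
Variables (A : int -> Omega -> R) (D : int -> option nat -> nat -> R) (H : int -> bool -> nat -> R).
Hypothesis fe_proj_Rind :
  forall e, e \in Eseq L K -> fe_proj P T L K S Q (Rind S Q e) (A e) (D e) (H e).
Hypothesis gram_unit : gram P T L K S Q A D H \in unitmx.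

Local Notation fitval := (fitval L K S Q).
Local Notation panel_dot := (panel_dot P T).
Local Notation panel_sqint := (panel_square_integrable P T).
Local Notation dm e := (Rdm L K S Q e (A e) (D e) (H e)).

Lemma gram_unit_T_gt0 : (0 < T)%N.
Proof.
move: gram_unit; case: T => [|//] G0.
have gram0 : gram P 0 L K S Q A D H = 0.
  apply/matrixP => i j; rewrite !mxE /=.
  by under eq_integral do rewrite big_geq //; rewrite integral0.
pose v : 'rV[R]_(size (Eseq L K)) := const_mx 1.
have : v = 0 by rewrite -(mulmxK G0 v) gram0 mulmx0 mul0mx.
have i0 : (index (0 : int) (Eseq L K) < size (Eseq L K))%N by rewrite index_mem mem0_Eseq.
move/(congr1 (fun M : 'rV[R]_(size (Eseq L K)) => M 0 (Ordinal i0))).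
by rewrite !mxE => /eqP; rewrite oner_eq0.
Qed.

Lemma panel_square_integrable_Rind e : panel_sqint (Rind S Q e).
Proof.
move=> t _; rewrite (_ : Rind S Q e t = fun x => event_ind R e t (S x) (Q x)).
  exact: (square_integrable_cellfun P S_in measurable_S measurable_Q).
by apply/funext => x; rewrite RindE.
Qed.

Lemma demeaned_orth e : e \in Eseq L K ->
  square_integrable P (A e) /\ panel_sqint (dm e) /\
  forall a dl et, square_integrable P a -> panel_dot (dm e) (fitval a dl et (fun _ => 0)) = 0.
Proof.
move=> he; have [hA orth] := fe_proj_orth S_in measurable_S measurable_Q gram_unit_T_gt0
  (panel_square_integrable_Rind e) (fe_proj_Rind he).
split; [exact: hA | split; last exact: orth].
exact: panel_square_integrable_resid (panel_square_integrable_Rind e) hA.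
Qed.

Lemma demeaned_fitval e t x : e \in Eseq L K ->
  dm e t x = fitval (fun x => - A e x) (fun s t => - D e s t) (fun q t => - H e q t)
    (fun e' => (e' == e)%:R) t x.
Proof.
move=> he; rewrite /Rdm /Defs.fitval big1 => [|e' _]; last by rewrite mul0r.
under [in RHS]eq_bigr do rewrite mulrC.
by rewrite sum_mul_eq_delta ?Eseq_uniq //; ring.
Qed.

Lemma gramE (i j : 'I_(size (Eseq L K))) :
  gram P T L K S Q A D H i j = panel_dot (dm (nth 0 (Eseq L K) i)) (dm (nth 0 (Eseq L K) j)).
Proof.
rewrite mxE /= integral_panel_sum //= => t ht.
have [_ [hi _]] := demeaned_orth (mem_nth 0 (ltn_ord i)).
have [_ [hj _]] := demeaned_orth (mem_nth 0 (ltn_ord j)).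
exact: square_integrable_integrableM (hi t ht) (hj t ht).
Qed.

(* Orthogonality to every demeaned event-time indicator says that the coefficient vector
   lies in the left kernel of the Gram matrix. *)
Lemma event_coef_eq0_of_orth a dl et be : square_integrable P a ->
  (forall j, j \in Eseq L K -> panel_dot (fitval a dl et be) (dm j) = 0) ->
  {in Eseq L K, be =1 fun=> 0}.
Proof.
move=> ha orth.
have hdm e : e \in Eseq L K -> panel_sqint (dm e) by case/demeaned_orth => _ [].
pose a2 x := a x + \sum_(e <- Eseq L K) be e * A e x.
have ha2 : square_integrable P a2.
  apply: square_integrableD => //; apply: square_integrable_sum => e he.
  by apply/square_integrableZ; case: (demeaned_orth he).
have hsum : panel_sqint (fun t x => \sum_(e <- Eseq L K) be e * dm e t x).
  by move=> t ht; apply: square_integrable_sum => e he; apply/square_integrableZ/hdm.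
have decomp : fitval a dl et be = fun t x =>
    fitval a2 (fun s t => dl s t + \sum_(e <- Eseq L K) be e * D e s t)
      (fun q t => et q t + \sum_(e <- Eseq L K) be e * H e q t) (fun _ => 0) t x +
    \sum_(e <- Eseq L K) be e * dm e t x.
  by apply/funext => t; apply/funext => x; apply: fitval_demeaned_decomp.
have gram_be j : j \in Eseq L K -> \sum_(e <- Eseq L K) be e * panel_dot (dm e) (dm j) = 0.
  move=> hj; have [_ [hdj orthj]] := demeaned_orth hj.
  have := orth j hj; rewrite decomp panel_dotC panel_dotDr //; last first.
    exact: panel_square_integrable_fitval.
  rewrite orthj // add0r panel_dot_sumr // => h0; rewrite -[RHS]h0.
  by apply: eq_bigr => e _; rewrite panel_dotC.
pose v := \row_(i < size (Eseq L K)) be (nth 0 (Eseq L K) i).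
have v0 : v *m gram P T L K S Q A D H = 0.
  apply/rowP => j; rewrite !mxE -[RHS](gram_be _ (mem_nth 0 (ltn_ord j))).
  rewrite (big_nth 0) big_mkord; apply: eq_bigr => i _.
  by rewrite mxE gramE.
have vz : v = 0 by rewrite -(mulmxK gram_unit v) v0 mul0mx.
move=> e he; have ie : (index e (Eseq L K) < size (Eseq L K))%N by rewrite index_mem.
have := congr1 (fun M : 'rV[R]_(size (Eseq L K)) => M 0 (Ordinal ie)) vz.
by rewrite !mxE /= nth_index.
Qed.

Lemma solves_normal_eqs_unique Z al1 al2 : panel_sqint Z ->
  solves_normal_eqs P T L K S Q Z al1 -> solves_normal_eqs P T L K S Q Z al2 ->
  {in Eseq L K, al1 =1 al2}.
Proof.
move=> hZ [a1 [dl1 [et1 [ha1 orth1]]]] [a2 [dl2 [et2 [ha2 orth2]]]] e he.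
suff /(_ e he) /= : {in Eseq L K, (fun e => al1 e + (-1) * al2 e) =1 fun=> 0} by lra.
apply: (event_coef_eq0_of_orth (a := fun x => a1 x + (-1) * a2 x)
  (dl := fun g t => dl1 g t + (-1) * dl2 g t) (et := fun q t => et1 q t + (-1) * et2 q t)) => //.
  exact/square_integrableD/square_integrableZ.
move=> j hj; have [hAj [hdj _]] := demeaned_orth hj.
have hr1 : panel_sqint (resid L K S Q Z a1 dl1 et1 al1).
  exact: panel_square_integrable_resid.
have hr2 : panel_sqint (resid L K S Q Z a2 dl2 et2 al2).
  exact: panel_square_integrable_resid.
rewrite (_ : fitval _ _ _ _ = fun t x => resid L K S Q Z a2 dl2 et2 al2 t x +
    (-1) * resid L K S Q Z a1 dl1 et1 al1 t x); last first.
  by apply/funext => t; apply/funext => x; rewrite fitval_comb /resid; ring.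
rewrite panel_dotC panel_dotDr ?panel_dotZr //; last first.
  by move=> t ht; apply/square_integrableZ/hr1.
have orth_dm (Z' : nat -> Omega -> R) a' dl' et' al' :
    (forall b db eb alb, square_integrable P b ->
       panel_dot (resid L K S Q Z' a' dl' et' al') (fitval b db eb alb) = 0) ->
    panel_dot (dm j) (resid L K S Q Z' a' dl' et' al') = 0.
  move=> orth'; rewrite panel_dotC.
  rewrite (_ : dm j = fitval (fun x => - A j x) (fun s t => - D j s t) (fun q t => - H j q t)
    (fun e' => (e' == j)%:R)); first by apply/orth'/square_integrableN.
  by apply/funext => t; apply/funext => x; apply: demeaned_fitval.
by rewrite !orth_dm // mulr0 addr0.
Qed.

(* Without a never-treated group the event-time dummies are collinear with the fixed
   effects: [\sum_e (e + 1) R_e = Q (t + 1 - S)] is absorbed by the unit and the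
   eligibility-by-time effects. *)
Lemma never_treated_in (window : forall g t, Some g \in Sset -> (1 <= t <= T)%N ->
    - (L%:Z) <= t%:Z - g%:Z <= K%:Z) :
  None \in Sset.
Proof.
apply/negPn/negP => noneN.
pose a x : R := if Q x then (if S x is Some g then g%:R else 0) else 0.
pose et (q : bool) (t : nat) : R := if q then - (t%:R + 1) else 0.
pose be (e : int) : R := (e + 1)%:~R.
have ha : square_integrable P a.
  exact: (square_integrable_cellfun P S_in measurable_S measurable_Q
    (fun s q => if q then (if s is Some g then g%:R else 0) else 0)).
suff orth0 j : j \in Eseq L K -> panel_dot (fitval a (fun _ _ => 0) et be) (dm j) = 0.
  have := event_coef_eq0_of_orth ha orth0 (mem0_Eseq L K).
  by rewrite /be add0r => /eqP; rewrite oner_eq0.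
move=> hj; apply: panel_dot_eq0l => t x ht; rewrite /Defs.fitval /a /et /be.
have := S_in x; case eS : (S x) => [g|]; last by rewrite (negbTE noneN).
move=> hg; have Rz e : Rind S Q e t x = (Q x && (e == t%:Z - g%:Z))%:R :> R.
  by rewrite /Rind eS (eq_sym e); case: (_ && _).
under eq_bigr do rewrite Rz.
case: (Q x) => /=; last by rewrite big1 => [|e _]; rewrite ?mulr0 ?addr0.
have e1 : ((t%:Z - g%:Z + 1)%:~R : R) = t%:R - g%:R + 1 by rewrite intrD intrB.
case: (boolP (t%:Z - g%:Z \in Eseq L K)) => hin.
  by rewrite sum_mul_eq_delta ?Eseq_uniq // e1; ring.
have htg : t%:Z - g%:Z = -1 by move: hin; rewrite mem_Eseq (window _ _ hg ht) /= negbK => /eqP.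
have htgR : t%:R - g%:R = -1 :> R.
  by have := congr1 (fun z : int => z%:~R : R) htg; rewrite intrB.
rewrite big_seq big1 => [|e he]; first by rewrite addr0; lra.
by move: he; rewrite mem_Eseq => /andP[_ /negbTE]; rewrite -htg eq_sym => ->; rewrite mulr0.
Qed.

End Identification.

Section CellIntegral.
Context (R : realType) (d : measure_display) (Omega : measurableType d).
Variable P : probability Omega R.
Variables (Sset : seq (option nat)) (S : Omega -> option nat) (Q : Omega -> bool).
Hypothesis measurable_S : forall s, measurable (S @^-1` [set s]).
Hypothesis measurable_Q : measurable (Q @^-1` [set true]).
Hypothesis cell_pos : forall s q, s \in Sset -> (0 < P (cell S Q s q))%E.
Implicit Types (f g : Omega -> R) (s : option nat) (q : bool).

Definition cell_integral f s q := \int[P]_x (\1_(cell S Q s q) x * f x).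

Definition cell_mass s q := fine (P (cell S Q s q)).

Lemma cell_mass_gt0 s q : s \in Sset -> 0 < cell_mass s q.
Proof.
move=> hs; apply: fine_gt0; rewrite cell_pos //=.
exact: le_lt_trans (probability_le1 P (measurable_cell measurable_S measurable_Q s q)) (ltry _).
Qed.

Lemma eq_cell_integral f g s q : (forall x, S x = s -> Q x = q -> f x = g x) ->
  cell_integral f s q = cell_integral g s q.
Proof.
move=> fg; apply: eq_Rintegral => x _; rewrite indic_cellE.
by case: (eqVneq (S x) s) => [hs|]; case: (eqVneq (Q x) q) => [hq|] //=; rewrite ?mul0r ?fg.
Qed.

Lemma cell_integralB f g s q : square_integrable P f -> square_integrable P g ->
  cell_integral (fun x => f x - g x) s q = cell_integral f s q - cell_integral g s q.
Proof.
move=> hf hg; rewrite /cell_integral -RintegralB //.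
- by apply: eq_Rintegral => x _; rewrite mulrBr.
- exact/square_integrable_integrable/square_integrable_indic_cellM.
- exact/square_integrable_integrable/square_integrable_indic_cellM.
Qed.

Lemma cell_integral_cst (k : R) s q : cell_integral (fun=> k) s q = k * cell_mass s q.
Proof.
rewrite /cell_integral; under eq_Rintegral do rewrite mulrC.
rewrite RintegralZl //; last exact/integrable_indic/measurable_cell.
by rewrite /Rintegral integral_indic ?setIT //; exact: measurable_cell.
Qed.

Lemma cmean_cellE f s q : s \in Sset ->
  cmean P f (cell S Q s q) * cell_mass s q = cell_integral f s q.
Proof.
move=> hs; rewrite /cmean divfK; last by rewrite gt_eqF // cell_mass_gt0.
rewrite -/(Rintegral P (cell S Q s q) f) Rintegral_mkcond.
apply: eq_Rintegral => x _; rewrite patchE indicE.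
by case: (x \in cell S Q s q); rewrite ?mul1r ?mul0r.
Qed.

Lemma cell_integral_ae f g s q : measurable_fun setT f -> measurable_fun setT g ->
  {ae P, forall x, f x = g x} -> cell_integral f s q = cell_integral g s q.
Proof.
move=> mf mg fg; rewrite /cell_integral /Rintegral; congr fine.
have mcell := measurable_indic_cell (R := R) measurable_S measurable_Q s q.
apply: ae_eq_integral => //; [exact/measurable_EFinP/measurable_funM..|].
by apply: filterS fg => x hx _ /=; rewrite hx.
Qed.

End CellIntegral.

Section NetOutcome.
Context (R : realType) (d : measure_display) (Omega : measurableType d).
Variable P : probability Omega R.
Variables (T L K : nat) (Sset : seq (option nat)) (S : Omega -> option nat) (Q : Omega -> bool)
  (Y : option nat -> nat -> Omega -> R).
Hypothesis S_in : forall x, S x \in Sset.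
Hypothesis measurable_S : forall s, measurable (S @^-1` [set s]).
Hypothesis measurable_Q : measurable (Q @^-1` [set true]).
Hypothesis none_in : None \in Sset.
Hypothesis Y_sqint : forall s t, s \in Sset -> (1 <= t <= T)%N -> square_integrable P (Y s t).
Hypothesis cell_pos : forall s q, s \in Sset -> (0 < P (cell S Q s q))%E.
Hypothesis window : forall g t, Some g \in Sset -> (1 <= t <= T)%N ->
  - (L%:Z) <= t%:Z - g%:Z <= K%:Z.
Hypothesis ddd_pct : forall g gc t, g \in Gtrg Sset -> gc \in Sset -> grp_gt gc g ->
  (2 <= t <= T)%N -> time_le t gc ->
  Delta P Y S Q t (Some g) true - Delta P Y S Q t (Some g) false =
  Delta P Y S Q t gc true - Delta P Y S Q t gc false.
Hypothesis T_gt0 : (0 < T)%N.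
Hypothesis no_anticipation : forall g t, g \in Gtrg Sset -> (1 <= t < g)%N ->
  {ae P, forall x, Y (Some g) t x = Y None t x}.

Local Notation CATT := (CATT P Y S Q).
Local Notation cell_integral := (cell_integral P S Q).
Local Notation cell_mass := (cell_mass P S Q).

Definition Ynet (t : nat) (x : Omega) : R := Yobs Y S Q t x -
  \sum_(g <- Gtrg Sset) \sum_(0 <= l < K.+1) CATT g l * Rgl S Q g l t x.

Lemma Yobs_Ynet_CATT : Yobs Y S Q = fun t x => Ynet t x +
  \sum_(p <- [seq (g, l) | g <- Gtrg Sset, l <- index_iota 0 K.+1])
    CATT p.1 p.2 * Rgl S Q p.1 p.2 t x.
Proof. by apply/funext => t; apply/funext => x; rewrite /Ynet big_allpairs subrK. Qed.

Lemma RglE g l t x : Rgl S Q g l t x = ((S x == Some g) && Q x && (t == g + l)%N)%:R :> R.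
Proof. by rewrite /Rgl; case: (_ && _). Qed.

Lemma square_integrable_Rgl g l t : square_integrable P (Rgl S Q g l t).
Proof.
rewrite (_ : Rgl S Q g l t = fun x => ((S x == Some g) && Q x && (t == g + l)%N)%:R).
  exact: (square_integrable_cellfun P S_in measurable_S measurable_Q
    (fun s q => ((s == Some g) && q && (t == g + l)%N)%:R)).
by apply/funext => x; rewrite RglE.
Qed.

Lemma Yobs_expand t x : Yobs Y S Q t x = Y None t x +
  \sum_(g <- Gtrg Sset) ((S x == Some g) && Q x)%:R * (Y (Some g) t x - Y None t x).
Proof.
rewrite /Yobs; have := S_in x; case eS: (S x) => [g|] hg; last first.
  by rewrite big1 ?addr0 // => g' _; rewrite mul0r.
rewrite -mem_Gtrg in hg.
rewrite (eq_bigr (fun g' => (Q x)%:R * (Y (Some g') t x - Y None t x) * (g' == g)%:R)).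
  rewrite sum_mul_eq_delta ?Gtrg_uniq //.
  by case: (Q x); rewrite ?mul1r ?mul0r ?addr0 //; ring.
move=> g' _; rewrite -[Some g == _]/(g == g') (eq_sym g).
by case: (g' == g); case: (Q x); rewrite /= ?mul1r ?mul0r ?mulr1 ?mulr0.
Qed.

Lemma square_integrable_Yobs t : (1 <= t <= T)%N -> square_integrable P (Yobs Y S Q t).
Proof.
move=> ht; rewrite (_ : Yobs Y S Q t = fun x => Y None t x + \sum_(g <- Gtrg Sset)
    ((S x == Some g) && Q x)%:R * (Y (Some g) t x - Y None t x)); last first.
  by apply/funext => x; rewrite Yobs_expand.
apply: square_integrableD; first exact: Y_sqint.
apply: square_integrable_sum => g hg.
apply: (square_integrable_cellfunM S_in measurable_S measurable_Q
  (fun s q => ((s == Some g) && q)%:R)).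
by apply: square_integrableB; apply: Y_sqint => //; rewrite -mem_Gtrg.
Qed.

Lemma square_integrable_Ynet t : (1 <= t <= T)%N -> square_integrable P (Ynet t).
Proof.
move=> ht; apply: square_integrableB; first exact: square_integrable_Yobs.
apply: square_integrable_sum => g _; apply: square_integrable_sum => l _.
exact/square_integrableZ/square_integrable_Rgl.
Qed.

Lemma Ynet_untreated t x : S x = None \/ Q x = false -> Ynet t x = Y None t x.
Proof.
move=> untreated; rewrite /Ynet big1 ?subr0 => [|g _]; last first.
  rewrite big1 // => l _; rewrite RglE.
  by case: untreated => ->; rewrite ?andbF mulr0.
by rewrite /Yobs; case: untreated => ->; case: (S x).
Qed.

Lemma Ynet_treated g t x : (1 <= t <= T)%N -> S x = Some g -> Q x ->
  Ynet t x = Y (Some g) t x - (if (g <= t)%N then CATT g (t - g) else 0).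
Proof.
move=> ht eS qx; rewrite /Ynet /Yobs eS qx; congr (_ - _).
have hg : Some g \in Sset by rewrite -eS.
under eq_bigr => g' _ do under eq_bigr => l _ do rewrite RglE eS qx andbT.
rewrite (eq_bigr (fun g' => (\sum_(0 <= l < K.+1) CATT g' l * (t == g' + l)%N%:R)
    * (g' == g)%:R)); last first.
  move=> g' _; rewrite mulr_suml; apply: eq_bigr => l _.
  rewrite -[Some g == _]/(g == g') (eq_sym g).
  by case: (g' == g); case: (t == g' + l)%N; rewrite /= ?mulr1 ?mulr0.
rewrite sum_mul_eq_delta ?Gtrg_uniq ?mem_Gtrg //.
case: (leqP g t) => hgt; last first.
  by rewrite big1 // => l _; rewrite (_ : (t == g + l)%N = false) ?mulr0 //; apply/eqP; lia.
have hw := window hg ht.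
rewrite (eq_bigr (fun l => CATT g l * (l == t - g)%N%:R)) => [|l _]; last first.
  by congr (_ * _%:R); apply/eqP/eqP; lia.
by rewrite /index_iota subn0 sum_mul_eq_delta ?iota_uniq // mem_iota; lia.
Qed.

(* Subtracting the CATTs turns every cell mean of the observed outcome into the cell mean
   of the never-treated potential outcome: for [t >= g] by the definition of the CATT,
   for [t < g] by no anticipation. *)
Lemma cell_integral_Ynet t s q : s \in Sset -> (1 <= t <= T)%N ->
  cell_integral (Ynet t) s q = cell_integral (Y None t) s q.
Proof.
move=> hs ht; case: s hs => [g|] hs; last first.
  by apply: eq_cell_integral => x eS _; apply: Ynet_untreated; left.
case: q; last by apply: eq_cell_integral => x _ qx; apply: Ynet_untreated; right.
transitivity (cell_integral (fun x => Y (Some g) t x -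
  (if (g <= t)%N then CATT g (t - g) else 0)) (Some g) true).
  by apply: eq_cell_integral => x eS qx; apply: Ynet_treated.
have [sg sn] := (Y_sqint hs ht, Y_sqint none_in ht).
rewrite (cell_integralB measurable_S measurable_Q) //; last exact: square_integrable_cst.
case: (leqP g t) => hgt.
  rewrite (cell_integral_cst P measurable_S measurable_Q) /CATT (subnKC hgt).
  rewrite (cmean_cellE measurable_S measurable_Q cell_pos) //.
  by rewrite (cell_integralB measurable_S measurable_Q) //; ring.
rewrite (cell_integral_cst P measurable_S measurable_Q) mul0r subr0.
apply: (cell_integral_ae measurable_S measurable_Q).
- by case: sg.
- by case: sn.
- by apply: no_anticipation; [rewrite mem_Gtrg | lia].
Qed.

Definition cell_mean0 s q t := cmean P (Y None t) (cell S Q s q).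

Definition ddd_gap s t := cell_mean0 s true t - cell_mean0 s false t.

Lemma Delta_cell_mean0 s q t : s \in Sset -> (2 <= t <= T)%N ->
  Delta P Y S Q t s q = cell_mean0 s q t - cell_mean0 s q t.-1.
Proof.
move=> hs ht; have [ht1 ht2] : (1 <= t <= T)%N /\ (1 <= t.-1 <= T)%N by lia.
apply: (mulIf (lt0r_neq0 (cell_mass_gt0 measurable_S measurable_Q cell_pos q hs))).
rewrite mulrBl !(cmean_cellE measurable_S measurable_Q cell_pos) //.
by rewrite (cell_integralB measurable_S measurable_Q) //; apply: Y_sqint.
Qed.

(* DDD-PCT with the never-treated group as comparison group. *)
Lemma ddd_gap_shift s t : s \in Sset -> (1 <= t <= T)%N ->
  ddd_gap s t - ddd_gap None t = ddd_gap s 1 - ddd_gap None 1.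
Proof.
case: s => [g|] hs; last by rewrite !subrr.
elim: t => [//|t IH] ht; have [->//|t0] := eqVneq t 0.
rewrite -IH; last by lia.
have hg : g \in Gtrg Sset by rewrite mem_Gtrg.
have ht2 : (2 <= t.+1 <= T)%N by lia.
have := ddd_pct hg none_in erefl ht2 erefl.
by rewrite !Delta_cell_mean0 //= /ddd_gap; lra.
Qed.

Definition cell_fe s (q : bool) := if q then ddd_gap s 1 - ddd_gap None 1 else 0.

Definition elig_fe (q : bool) t := if q then ddd_gap None t else 0.

Lemma cell_mean0_decomp s q t : s \in Sset -> (1 <= t <= T)%N ->
  cell_mean0 s q t = cell_fe s q + cell_mean0 s false t + elig_fe q t.
Proof.
move=> hs ht; case: q; rewrite /cell_fe /elig_fe /=; last by rewrite add0r addr0.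
by have := ddd_gap_shift hs ht; rewrite /ddd_gap; lra.
Qed.

Definition cell_dev t x := Ynet t x - cell_mean0 (S x) (Q x) t.

Definition cell_dev_avg x := T%:R^-1 * \sum_(1 <= t < T.+1) cell_dev t x.

Definition Ynet_unit_fe x := cell_dev_avg x + cell_fe (S x) (Q x).

Lemma square_integrable_cell_dev t : (1 <= t <= T)%N -> square_integrable P (cell_dev t).
Proof.
move=> ht; apply: square_integrableB; first exact: square_integrable_Ynet.
exact: (square_integrable_cellfun P S_in measurable_S measurable_Q (fun s q => cell_mean0 s q t)).
Qed.

Lemma square_integrable_cell_dev_avg : square_integrable P cell_dev_avg.
Proof.
apply/square_integrableZ/square_integrable_sum => t.
by rewrite mem_index_iota; apply: square_integrable_cell_dev.
Qed.

Lemma resid_YnetE t x : (1 <= t <= T)%N ->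
  resid L K S Q Ynet Ynet_unit_fe (fun s t => cell_mean0 s false t) elig_fe (fun=> 0) t x =
  cell_dev t x - cell_dev_avg x.
Proof.
move=> ht; rewrite /resid /Defs.fitval /cell_dev /Ynet_unit_fe big1 => [|e _]; last first.
  by rewrite mul0r.
by rewrite (cell_mean0_decomp (Q x) (S_in x) ht); ring.
Qed.

Lemma cell_integral_cell_dev t s q : s \in Sset -> (1 <= t <= T)%N ->
  cell_integral (cell_dev t) s q = 0.
Proof.
move=> hs ht; rewrite (cell_integralB measurable_S measurable_Q); first last.
- exact: (square_integrable_cellfun P S_in measurable_S measurable_Q (fun s q => cell_mean0 s q t)).
- exact: square_integrable_Ynet.
rewrite cell_integral_Ynet // (eq_cell_integral P (f := fun x => cell_mean0 (S x) (Q x) t)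
  (g := fun=> cell_mean0 s q t)); last by move=> x -> ->.
rewrite (cell_integral_cst P measurable_S measurable_Q) /cell_mean0.
by rewrite (cmean_cellE measurable_S measurable_Q cell_pos) // subrr.
Qed.

Lemma cell_integral_cell_dev_avg s q : s \in Sset -> cell_integral cell_dev_avg s q = 0.
Proof.
move=> hs; have int_t t : t \in index_iota 1 T.+1 ->
    P.-integrable setT (EFin \o (fun x => \1_(cell S Q s q) x * cell_dev t x)).
  rewrite mem_index_iota => ht; apply/square_integrable_integrable.
  exact/(square_integrable_indic_cellM measurable_S measurable_Q)/square_integrable_cell_dev.
rewrite /cell_integral /cell_dev_avg; under eq_Rintegral do rewrite mulrCA mulr_sumr.
rewrite RintegralZl //; last exact: integrable_sum_EFin.
rewrite Rintegral_sum // big_seq big1 ?mulr0 // => t.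
by rewrite mem_index_iota => ht; apply: cell_integral_cell_dev.
Qed.

(* The fitted value of [Ynet] on the fixed effects alone already satisfies all normal
   equations: its residual is orthogonal to unit effects because it averages to zero over
   time, and to group/eligibility-by-time effects because its cell integrals vanish. *)
Lemma Ynet_normal_eqs :
  normal_eqs P T L K S Q Ynet Ynet_unit_fe (fun s t => cell_mean0 s false t) elig_fe (fun=> 0).
Proof.
have unit_sqint : square_integrable P Ynet_unit_fe.
  apply: square_integrableD; first exact: square_integrable_cell_dev_avg.
  exact: (square_integrable_cellfun P S_in measurable_S measurable_Q cell_fe).
split => // b db eb alb hb.
set rho := resid L K S Q Ynet _ _ _ _.
have rho_sqint : panel_square_integrable P T rho.
  rewrite /rho; apply: panel_square_integrable_resid => //.
  by move=> t ht; apply: square_integrable_Ynet.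
have dev_sqint t : (1 <= t <= T)%N ->
    square_integrable P (fun x => cell_dev t x - cell_dev_avg x).
  by move=> ht; apply/square_integrableB/square_integrable_cell_dev_avg/square_integrable_cell_dev.
have orth_unit : panel_dot P T rho (fun _ x => b x) = 0.
  rewrite /panel_dot big_nat (eq_bigr (fun t =>
      \int[P]_x ((cell_dev t x - cell_dev_avg x) * b x))) => [|t ht]; last first.
    by apply: eq_Rintegral => x _; rewrite /rho resid_YnetE.
  rewrite -big_nat -Rintegral_sum => [|t]; last first.
    by rewrite mem_index_iota => ht; apply: square_integrable_integrableM => //; apply: dev_sqint.
  have sum_dev0 x : \sum_(1 <= t < T.+1) (cell_dev t x - cell_dev_avg x) * b x = 0.
    rewrite -mulr_suml sumrB sumr_const_nat subn1 /= /cell_dev_avg -[_ *+ T]mulr_natl.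
    by rewrite mulrA mulfV ?mul1r ?subrr ?mul0r // pnatr_eq0 -lt0n.
  by under eq_Rintegral do rewrite sum_dev0; rewrite Rintegral_cst // mul0r.
have orth_cell : panel_dot P T rho (fun t x => cell_fit L K db eb alb t (S x) (Q x)) = 0.
  rewrite /panel_dot big_nat big1 // => t ht; under eq_Rintegral do rewrite mulrC.
  rewrite (Rintegral_cellfunM S_in measurable_S measurable_Q _ (rho_sqint t ht)).
  rewrite big_seq big1 // => sq.
  move=> /mem_cells hs; rewrite (_ : \int[P]_x _ = cell_integral
      (fun x => cell_dev t x - cell_dev_avg x) sq.1 sq.2).
    rewrite (cell_integralB measurable_S measurable_Q) ?cell_integral_cell_dev //.
    - by rewrite cell_integral_cell_dev_avg // subr0 mulr0.
    - exact: square_integrable_cell_dev.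
    - exact: square_integrable_cell_dev_avg.
  by apply: eq_Rintegral => x _; rewrite /rho resid_YnetE.
rewrite (_ : fitval L K S Q b db eb alb = fun t x => b x + cell_fit L K db eb alb t (S x) (Q x)).
  rewrite panel_dotDr // ?orth_unit ?orth_cell ?addr0 // => t ht.
  exact: (square_integrable_cellfun P S_in measurable_S measurable_Q).
by apply/funext => t; apply/funext => x; rewrite fitvalE.
Qed.

End NetOutcome.

Theorem mainTheorem3 (R : realType) (d : measure_display) (Omega : measurableType d)
  (P : probability Omega R) (T L K : nat) (Sset : seq (option nat))
  (S : Omega -> option nat) (Q : Omega -> bool) (Y : option nat -> nat -> Omega -> R)
  (alpha : int -> R) (omega : nat -> nat -> int -> R) :
  (* S is a subset of {2,...,T} u {oo}, and S_i takes values in S *)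
  (forall g : nat, Some g \in Sset -> (2 <= g <= T)%N) ->
  (forall x, S x \in Sset) ->
  (forall s, measurable (S @^-1` [set s])) ->
  measurable (Q @^-1` [set true]) ->
  (forall s t, (s \in Sset \/ s = None) -> measurable_fun setT (Y s t)) ->
  (forall s t, (s \in Sset \/ s = None) -> (1 <= t <= T)%N ->
     P.-integrable setT (fun x => ((Y s t x) ^+ 2)%:E)) ->
  (* all cells (s, q) used in the conditional expectations have positive mass *)
  (forall s q, s \in Sset -> (0 < P [set x | S x = s /\ Q x = q])%E) ->
  (* the event-time window E = {-L,...,K} \ {-1} covers all event times *)
  (forall g t, Some g \in Sset -> (1 <= t <= T)%N ->
     - (L%:Z) <= t%:Z - g%:Z <= K%:Z) ->
  (* nonsingular Gram matrix of the three-way demeaned event-time indicators *)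
  (exists (A : int -> Omega -> R) (D : int -> option nat -> nat -> R)
          (H : int -> bool -> nat -> R),
     (forall e, e \in Eseq L K -> fe_proj P T L K S Q (Rind S Q e) (A e) (D e) (H e)) /\
     gram P T L K S Q A D H \in unitmx) ->
  (forall g t, g \in Gtrg Sset -> (1 <= t < g)%N ->
     {ae P, forall x, Y (Some g) t x = Y None t x}) ->
  (forall g gc t, g \in Gtrg Sset -> gc \in Sset -> grp_gt gc g ->
     (2 <= t <= T)%N -> time_le t gc ->
     Delta P Y S Q t (Some g) true - Delta P Y S Q t (Some g) false =
     Delta P Y S Q t gc true - Delta P Y S Q t gc false) ->
  (* alpha: population coefficients of the event-study regression of Y *)
  ols_coef P T L K S Q (Yobs Y S Q) alpha ->
  (* omega^{.,*}_{g,l}: coefficients of the regression of R_{g,l} on the same regressors *)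
  (forall g l, g \in Gtrg Sset -> (l <= K)%N ->
     ols_coef P T L K S Q (Rgl S Q g l) (omega g l)) ->
  forall j, j \in Eseq L K ->
    alpha j = \sum_(g <- Gtrg Sset) \sum_(0 <= l < K.+1) omega g l j * CATT P Y S Q g l.
Proof.
move=> _ S_in mS mQ measurable_Y Y_sq2 cell_pos window [A [D [H [fe_proj_Rind gram_unit]]]]
  no_anticipation ddd_pct ols_alpha ols_omega j hj.
have T_gt0 := gram_unit_T_gt0 gram_unit.
have none_in := never_treated_in S_in mS mQ fe_proj_Rind gram_unit window.
have Y_sqint s t : s \in Sset -> (1 <= t <= T)%N -> square_integrable P (Y s t).
  by move=> hs ht; split; [apply: measurable_Y; left | apply: Y_sq2 => //; left].
have Yobs_sqint : panel_square_integrable P T (Yobs Y S Q).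
  by move=> t ht; apply: (square_integrable_Yobs S_in mS mQ none_in Y_sqint).
have Rgl_sqint g l : panel_square_integrable P T (Rgl S Q g l).
  by move=> t ht; apply: (square_integrable_Rgl P S_in mS mQ).
have Yobs_solves := ols_coef_solves_normal_eqs S_in mS mQ T_gt0 Yobs_sqint ols_alpha.
have Yobs_solves_catt : solves_normal_eqs P T L K S Q (Yobs Y S Q) (fun e => 0 +
    \sum_(p <- [seq (g, l) | g <- Gtrg Sset, l <- index_iota 0 K.+1])
      CATT P Y S Q p.1 p.2 * omega p.1 p.2 e).
  rewrite (Yobs_Ynet_CATT P K Sset); apply: (solves_normal_eqs_sum S_in mS mQ) => //.
  - by move=> t ht; apply: (square_integrable_Ynet K S_in mS mQ none_in Y_sqint).
  - by do 3!eexists; apply: (Ynet_normal_eqs S_in mS mQ none_in Y_sqint cell_pos window).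
  - move=> _ /allpairsP[[g l] [hg hl ->]] /=.
    apply: (ols_coef_solves_normal_eqs S_in mS mQ T_gt0) => //.
    by apply: ols_omega => //; move: hl; rewrite mem_index_iota.
rewrite (solves_normal_eqs_unique S_in mS mQ fe_proj_Rind gram_unit Yobs_sqint
  Yobs_solves Yobs_solves_catt hj) add0r big_allpairs.
by apply: eq_bigr => g _; apply: eq_bigr => l _; rewrite mulrC.
Qed.
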